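(* Let $r\ge3$, $n_1,\dots,n_r\ge1$, $p\in \{1,\ldots,\min(n_1,n_2)\}$, $\pi' \in C_2((n_1+n_2-2p)\otimes n_3 \otimes \ldots \otimes n_r)$, $\sigma_1:\{1,\ldots,p\} \to \{1,\ldots,n_1\}$ decreasing and $\sigma_2:\{1,\ldots,p\} \to \{1,\ldots,n_2\}$ injective. Then \[ \mathrm{Cr}(F(\sigma_1,\sigma_2,\pi'))=\alpha_{n_1}(\sigma_1)+\beta(\sigma_2)+\mathrm{Cr}(\pi'). \]
   Context: For a pairing $\pi$ (partition into two-element sets) of a finite set of integers, a crossing is a pair of blocks $\{x_1,y_1\},\{x_2,y_2\}\in\pi$ with $x_1<x_2<y_1<y_2$; $\mathrm{Cr}(\pi)$ is their number. Blocks and respecting pairings: for $n_1,\dots,n_r\ge1$ and $N=n_1+\dots+n_r$, the blocks of $n_1\otimes\cdots\otimes n_r$ are $\{1,\dots,n_1\}$, $\{n_1+1,\dots,n_1+n_2\}$, etc.; $C_2(n_1\otimes\cdots\otimes n_r)$ is the set of pairings of $\{1,\dots,N\}$ each of whose pairs joins two different blocks. For an injective $\sigma:\{1,\dots,p\}\to\{1,\dots,m\}$, $\mathrm{inv}(\sigma)=\mathrm{Card}\{i<j:\sigma(i)>\sigma(j)\}$, $\alpha_n(\sigma):=\sum_{i=1}^p (n+1-\sigma(i))-\frac{p(p+1)}{2}$ and $\beta(\sigma):=\sum_{i=1}^p \sigma(i)-\frac{p(p+1)}{2}+\mathrm{inv}(\sigma)$. Construction $F$: $\pi=F(\sigma_1,\sigma_2,\pi')\in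 C_2(n_1\otimes\cdots\otimes n_r)$ consists of the $p$ pairs $\{\sigma_1(i),n_1+\sigma_2(i)\}$, $1\le i\le p$, together with the pairs obtained from $\pi'$ by identifying the first block $\{1,\dots,n_1+n_2-2p\}$ of $\pi'$ (in increasing order) with the $n_1+n_2-2p$ points of $\{1,\dots,n_1+n_2\}$ not used in those $p$ pairs (in increasing order), and the point $n_1+n_2-2p+j$ of $\pi'$ with $n_1+n_2+j$ for $j\ge1$. *)

From mathcomp Require Import all_boot.
Set Implicit Arguments. Unset Strict Implicit. Unset Printing Implicit Defensive.

(* A pair/block {x,y} of a pairing is stored as (x,y) with x < y;
   a pairing is a finite list of such blocks. *)
Definition pairing := seq (nat * nat).

Definition is_pairing (N : nat) (pi : pairing) : bool :=
  all (fun b => b.1 < b.2) pi &&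
  perm_eq (flatten [seq [:: b.1; b.2] | b <- pi]) (iota 1 N).

Definition Cr (pi : pairing) : nat :=
  \sum_(b1 <- pi) \sum_(b2 <- pi)
     [&& b1.1 < b2.1, b2.1 < b1.2 & b1.2 < b2.2].

(* Index (0-based) of the block of n_1 (x) ... (x) n_r containing k. *)
Definition blk (ns : seq nat) (k : nat) : nat :=
  count (fun s => s < k) [seq sumn (take j ns) | j <- iota 1 (size ns)].

Definition C2 (ns : seq nat) (pi : pairing) : bool :=
  is_pairing (sumn ns) pi && all (fun b => blk ns b.1 != blk ns b.2) pi.

(* Maps sigma : {1..p} -> {1..m} are functions nat -> nat; only the
   values on {1..p} matter. *)
Definition maps_into (p m : nat) (s : nat -> nat) : Prop :=
  forall i, 1 <= i <= p -> 1 <= s i <= m.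

Definition injective_on (p : nat) (s : nat -> nat) : Prop :=
  forall i j, 1 <= i <= p -> 1 <= j <= p -> s i = s j -> i = j.

Definition decreasing_on (p : nat) (s : nat -> nat) : Prop :=
  forall i j, 1 <= i -> i < j -> j <= p -> s j < s i.

Definition inv (p : nat) (s : nat -> nat) : nat :=
  \sum_(1 <= i < p.+1) \sum_(1 <= j < p.+1) (i < j) && (s j < s i).

Definition alpha (n p : nat) (s : nat -> nat) : nat :=
  \sum_(1 <= i < p.+1) (n.+1 - s i) - (p * p.+1) %/ 2.

Definition beta (p : nat) (s : nat -> nat) : nat :=
  \sum_(1 <= i < p.+1) s i - (p * p.+1) %/ 2 + inv p s.

Definition F (n1 n2 p : nat) (s1 s2 : nat -> nat) (pi' : pairing) : pairing :=
  let used := [seq s1 i | i <- iota 1 p] ++ [seq n1 + s2 i | i <- iota 1 p] in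
  let U := [seq k <- iota 1 (n1 + n2) | k \notin used] in
  let M := n1 + n2 - 2 * p in
  let g := fun k => if k <= M then nth 0 U k.-1 else n1 + n2 + (k - M) in
  [seq (s1 i, n1 + s2 i) | i <- iota 1 p] ++ [seq (g b.1, g b.2) | b <- pi'].

From Pilot Require Import Defs.
From mathcomp Require Import all_boot zify.

Set Implicit Arguments.
Unset Strict Implicit.
Unset Printing Implicit Defensive.

(* Write F(s1, s2, pi') as the p long pairs (s1 i, n1 + s2 i) followed by pi'
   relabelled through the increasing map g.  Crossings inside pi' survive the
   relabelling unchanged, and since s1 is decreasing the long pairs cross each
   other exactly at the inversions of s2.  A block of pi' has at most one point
   in the first block of pi', and its other point is sent beyond n1 + n2; so it
   crosses the long pair i exactly when its first point lands strictly between
   s1 i and n1 + s2 i.  As g maps the first block onto the unused points, the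
   long pair i is therefore crossed by as many blocks as there are unused points
   in that interval: n1 + 1 - s1 i - i of them up to n1, and
   s2 i - 1 - #{j | s2 j < s2 i} beyond n1.  Summing over i gives alpha and
   beta - inv. *)

Lemma sum_nat_count (T : Type) (a : pred T) (s : seq T) :
  \sum_(x <- s) (a x : nat) = count a s.
Proof. by rewrite -sum1_count [RHS]big_mkcond. Qed.

Lemma sum_iota1 p : \sum_(i <- iota 1 p) i = (p * p.+1) %/ 2.
Proof.
have := bin2_sum p.+1; rewrite big_ltn // bin2 -divn2 mulnC /= => <-.
by rewrite /index_iota subn1.
Qed.

Lemma count_iota_lt a m n : count (fun j => j < a) (iota m n) = minn n (a - m).
Proof. by elim: n m => [|n IH] m /=; rewrite ?min0n // IH; case: ltnP; lia. Qed.

Lemma count_iota_between a b m n :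
  count (fun u => a < u < b) (iota m n) = minn (m + n) b - maxn m a.+1.
Proof.
elim: n m => [|n IH] m /=; first by rewrite addn0; lia.
by rewrite IH; case: (ltnP a m); case: (ltnP m b) => /=; lia.
Qed.

Lemma count_between_split a b c s : a <= b < c ->
  count (fun u => a < u < c) s =
  count (fun u => a < u < b.+1) s + count (fun u => b < u < c) s.
Proof.
move=> /andP[ab bc]; elim: s => //= x s ->.
by case: (ltnP a x); case: (ltnP x c); case: (ltnP x b.+1); case: (ltnP b x) => /=;
  lia.
Qed.

Lemma sum_count_lt_inj p s : injective_on p s ->
  (\sum_(i <- iota 1 p) count (fun j => s j < s i) (iota 1 p)) * 2 + p = p * p.
Proof.
move=> s_inj.
have trichotomy i j : i \in iota 1 p -> j \in iota 1 p ->
    (s j < s i) + (s i < s j) + (j == i) = 1.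
  rewrite !mem_iota => Hi Hj; case: ltngtP => [lt|gt|eq] /=.
  - by case: eqP lt => // ->; rewrite ltnn.
  - by case: eqP gt => // ->; rewrite ltnn.
  - by rewrite (s_inj j i Hj Hi eq) eqxx.
have row i : i \in iota 1 p -> count (fun j => s j < s i) (iota 1 p)
    + count (fun j => s i < s j) (iota 1 p) + 1 = p.
  move=> Hi; have one : count (pred1 i) (iota 1 p) = 1.
    by rewrite count_uniq_mem ?iota_uniq ?Hi.
  rewrite -[X in _ + X = _]one -!sum_nat_count.
  rewrite -!big_split /= -[RHS](size_iota 1 p) -sum1_size.
  by apply: eq_big_seq => j Hj; rewrite trichotomy.
have rows : \sum_(i <- iota 1 p) (count (fun j => s j < s i) (iota 1 p)
    + count (fun j => s i < s j) (iota 1 p) + 1) = p * p.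
  by rewrite (eq_big_seq _ row) big_const_seq count_predT size_iota iter_addn_0.
move: rows; rewrite !big_split /= sum1_size size_iota.
under [X in _ + X + _ = _]eq_bigr do rewrite -sum_nat_count.
rewrite exchange_big /=.
under [X in _ + X + _ = _]eq_bigr do rewrite sum_nat_count.
lia.
Qed.

Definition endpoints (pi : pairing) : seq nat :=
  flatten [seq [:: q.1; q.2] | q <- pi].

Lemma sum_endpoints (w : nat -> nat) (pi : pairing) :
  \sum_(q <- pi) (w q.1 + w q.2) = \sum_(k <- endpoints pi) w k.
Proof.
by rewrite big_flatten big_map; apply: eq_bigr => q _; rewrite big_cons big_seq1.
Qed.

Lemma is_pairing_sum N pi (w : nat -> nat) : is_pairing N pi ->
  \sum_(q <- pi) (w q.1 + w q.2) = \sum_(k <- iota 1 N) w k.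
Proof. by case/andP => _ ends; rewrite sum_endpoints (perm_big _ ends). Qed.

Lemma is_pairing_block N pi q : is_pairing N pi -> q \in pi -> 0 < q.1 < q.2.
Proof.
case/andP => /allP lt12 /perm_mem ends q_pi; rewrite lt12 // andbT.
have : q.1 \in endpoints pi by apply/flatten_mapP; exists q; rewrite ?inE ?eqxx.
by rewrite ends mem_iota => /andP[].
Qed.

Lemma blk_head M rest k : k <= M -> blk (M :: rest) k = 0.
Proof.
move=> k_le; rewrite /blk count_map (@eq_in_count _ _ pred0) ?count_pred0 //.
case=> [|j]; rewrite mem_iota //= => _; rewrite ltnNge; apply/negbTE/negPn.
exact: leq_trans k_le (leq_addr _ _).
Qed.

Lemma C2_snd_gt_head M rest pi : C2 (M :: rest) pi -> all (fun q => M < q.2) pi.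
Proof.
case/andP => /andP[/allP lt12 _] /allP diff; apply/allP => q q_pi.
rewrite ltnNge; apply/negP => q2_le.
have := diff q q_pi; rewrite !blk_head //.
exact: leq_trans (ltnW (lt12 q q_pi)) q2_le.
Qed.

Definition crossing (b1 b2 : nat * nat) : bool :=
  [&& b1.1 < b2.1, b2.1 < b1.2 & b1.2 < b2.2].

Lemma Cr_cat A B : Cr (A ++ B) =
  Cr A + Cr B + \sum_(a <- A) \sum_(b <- B) (crossing a b + crossing b a).
Proof.
rewrite /Cr big_cat /=.
under eq_bigr do rewrite big_cat /=.
under [X in _ + X]eq_bigr do rewrite big_cat /=.
rewrite !big_split /= [\sum_(b <- B) \sum_(a <- A) _]exchange_big /=.
under [X in _ = _ + X]eq_bigr do rewrite big_split /=.
rewrite big_split /= /crossing; lia.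
Qed.

Lemma crossing_far_right a c x y : c < y ->
  crossing (a, c) (x, y) + crossing (x, y) (a, c) = (a < x < c).
Proof.
by move=> cy; rewrite /crossing /= cy andbT (ltnNge y c) (ltnW cy) !andbF addn0.
Qed.

Lemma Cr_map_mono (D : {pred nat}) (f : nat -> nat) (pi : pairing) :
  {in D &, {mono f : x y / x < y}} ->
  all (fun q => (q.1 \in D) && (q.2 \in D)) pi ->
  Cr [seq (f q.1, f q.2) | q <- pi] = Cr pi.
Proof.
move=> f_mono /allP piD; rewrite /Cr big_map.
apply: eq_big_seq => b /piD/andP[b1 b2].
by rewrite big_map; apply: eq_big_seq => q /piD/andP[q1 q2] /=; rewrite !f_mono.
Qed.

Section Relabel.

Variables (N M : nat) (used : seq nat).
Hypotheses (used_uniq : uniq used) (used_sub : {subset used <= iota 1 N})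
  (M_def : M = N - size used).

Definition unused : seq nat := [seq k <- iota 1 N | k \notin used].

(* With N := n1 + n2, M := n1 + n2 - 2p and [used] the endpoints of the long
   pairs, [relabel] is the map of construction F: the first block {1..M} is
   sent increasingly onto the unused points, the rest is shifted past N. *)
Definition relabel (k : nat) : nat :=
  if k <= M then nth 0 unused k.-1 else N + (k - M).

Lemma count_unused (a : pred nat) :
  count a unused + count a used = count a (iota 1 N).
Proof.
have used_filter : perm_eq [seq k <- iota 1 N | k \in used] used.
  apply: uniq_perm; rewrite ?filter_uniq ?iota_uniq // => k.
  by rewrite mem_filter andb_idr // => /used_sub.
rewrite -(permP used_filter) addnC -count_cat; apply/permP.
by rewrite perm_filterC.
Qed.

Lemma size_unused : size unused = M.
Proof.
have := count_unused predT; rewrite !count_predT size_iota M_def => <-.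
by rewrite addnK.
Qed.

Lemma mem_unused u : u \in unused -> 0 < u <= N.
Proof. by rewrite mem_filter mem_iota => /andP[_]; lia. Qed.

Lemma relabel_head k : 0 < k <= M -> relabel k \in unused.
Proof.
by move=> /andP[k_gt0 k_le]; rewrite /relabel k_le mem_nth // size_unused; lia.
Qed.

Lemma relabel_tail k : M < k -> N < relabel k.
Proof. by move=> k_big; rewrite /relabel (leqNgt k M) k_big /=; lia. Qed.

Lemma relabel_homo : {in [pred k | 0 < k] &, {homo relabel : x y / x < y}}.
Proof.
move=> x y; rewrite !inE => x_gt0 y_gt0 xy.
case: (leqP y M) => [y_le | y_gt].
- rewrite /relabel y_le (leq_trans (ltnW xy) y_le).
  apply: (sorted_ltn_nth ltn_trans); rewrite ?inE ?size_unused; try lia.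
  exact/sorted_filter/iota_ltn_sorted/ltn_trans.
- have /relabel_tail y_big := y_gt.
  case: (leqP x M) => [x_le | x_gt].
  + have /mem_unused : relabel x \in unused by apply: relabel_head; rewrite x_gt0.
    lia.
  + by rewrite /relabel (leqNgt x M) x_gt (leqNgt y M) y_gt /=; lia.
Qed.

Lemma relabel_mono : {in [pred k | 0 < k] &, {mono relabel : x y / x < y}}.
Proof. exact/leqW_mono_in/leq_mono_in/relabel_homo. Qed.

Lemma map_relabel_iota : [seq relabel k | k <- iota 1 M] = unused.
Proof.
rewrite -[RHS](mkseq_nth 0) /mkseq size_unused -[1]addn0 iotaDl -map_comp.
by apply/eq_in_map => k; rewrite mem_iota /= /relabel => k_lt; rewrite ifT.
Qed.

Lemma Cr_relabel K pi : is_pairing K pi ->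
  Cr [seq (relabel q.1, relabel q.2) | q <- pi] = Cr pi.
Proof.
move=> pi_pair; apply: (Cr_map_mono relabel_mono); apply/allP => q q_pi.
have /andP[q1_gt0 q12] := is_pairing_block pi_pair q_pi.
by rewrite !inE q1_gt0 (ltn_trans q1_gt0 q12).
Qed.

Lemma sum_crossing_relabel K pi a c :
  is_pairing (M + K) pi -> all (fun q => M < q.2) pi -> c <= N ->
  \sum_(q <- pi) (crossing (a, c) (relabel q.1, relabel q.2)
                  + crossing (relabel q.1, relabel q.2) (a, c))
  = count (fun u => a < u < c) unused.
Proof.
move=> pi_pair /allP pi_tail c_le.
pose w k : nat := a < relabel k < c.
have w_tail k : M < k -> w k = 0.
  move=> /relabel_tail k_big.
  by rewrite /w (ltnNge (relabel k) c) (ltnW (leq_ltn_trans c_le k_big)) andbF.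
transitivity (\sum_(q <- pi) (w q.1 + w q.2)).
  apply: eq_big_seq => q /pi_tail q2_big; rewrite (w_tail _ q2_big) addn0.
  exact/crossing_far_right/(leq_ltn_trans c_le (relabel_tail q2_big)).
rewrite (is_pairing_sum _ pi_pair) iotaD big_cat /= [X in _ + X]big1_seq ?addn0.
  by rewrite -map_relabel_iota -sum_nat_count big_map.
by move=> k /andP[_]; rewrite mem_iota => /andP[k_big _]; apply: w_tail.
Qed.

End Relabel.

Section LongPairs.

Variables (n1 n2 p : nat) (s1 s2 : nat -> nat).
Hypotheses (s1_into : maps_into p n1 s1) (s1_dec : decreasing_on p s1)
  (s2_into : maps_into p n2 s2) (s2_inj : injective_on p s2).

Definition long_pairs : pairing := [seq (s1 i, n1 + s2 i) | i <- iota 1 p].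

Definition long_ends : seq nat :=
  [seq s1 i | i <- iota 1 p] ++ [seq n1 + s2 i | i <- iota 1 p].

Let s1_in i : i \in iota 1 p -> 0 < s1 i <= n1.
Proof. by rewrite mem_iota; apply: s1_into. Qed.

Let s2_in i : i \in iota 1 p -> 0 < s2 i <= n2.
Proof. by rewrite mem_iota; apply: s2_into. Qed.

Local Notation U := (unused (n1 + n2) long_ends).
Local Notation g := (relabel (n1 + n2) (n1 + n2 - 2 * p) long_ends).

Lemma F_long_relabel pi :
  F n1 n2 p s1 s2 pi = long_pairs ++ [seq (g q.1, g q.2) | q <- pi].
Proof. by []. Qed.

Lemma ltn_s1 i j : i \in iota 1 p -> j \in iota 1 p -> (s1 i < s1 j) = (j < i).
Proof.
rewrite !mem_iota => /andP[i_ge i_le] /andP[j_ge j_le].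
case: (ltngtP i j) => [ij | ji | ->]; last exact: ltnn.
- by apply/negbTE; rewrite -leqNgt ltnW //; apply: s1_dec.
- exact/idP/s1_dec.
Qed.

Lemma long_ends_uniq : uniq long_ends.
Proof.
have s1_inj : {in iota 1 p &, injective s1}.
  move=> i j Hi Hj Eij; case: (ltngtP i j) => [ij | ji | //].
  - by move: (ltn_s1 Hj Hi); rewrite Eij ltnn ij.
  - by move: (ltn_s1 Hi Hj); rewrite Eij ltnn ji.
have shift_s2_inj : {in iota 1 p &, injective (fun i => n1 + s2 i)}.
  by move=> i j; rewrite !mem_iota => Hi Hj /addnI; apply: s2_inj.
rewrite cat_uniq !map_inj_in_uniq ?iota_uniq // andbT.
apply/hasPn => x /mapP[j Hj ->]; apply/mapP => -[i Hi].
by have := s1_in Hi; have := s2_in Hj; lia.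
Qed.

Lemma long_ends_sub : {subset long_ends <= iota 1 (n1 + n2)}.
Proof.
move=> x; rewrite mem_cat mem_iota => /orP[] /mapP[i Hi ->].
- by have := s1_in Hi; lia.
- by have := s2_in Hi; lia.
Qed.

Lemma size_long_ends : n1 + n2 - 2 * p = n1 + n2 - size long_ends.
Proof. by rewrite size_cat !size_map size_iota addnn -mul2n. Qed.

Lemma Cr_long_pairs : Cr long_pairs = Defs.inv p s2.
Proof.
rewrite /Cr /Defs.inv big_map /index_iota subn1 exchange_big /= big_map.
apply: eq_big_seq => j Hj; apply: eq_big_seq => i Hi /=.
rewrite ltn_s1 // ltn_add2l.
by have := s1_in Hj; have := s2_in Hi; lia.
Qed.

Lemma count_unused_left i : i \in iota 1 p ->
  count (fun u => s1 i < u < n1.+1) U + i = n1.+1 - s1 i.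
Proof.
move=> Hi.
have := count_unused long_ends_uniq long_ends_sub (fun u => s1 i < u < n1.+1).
rewrite count_iota_between count_cat !count_map.
have -> : count (preim (fun j => n1 + s2 j) (fun u => s1 i < u < n1.+1)) (iota 1 p) = 0.
  rewrite (@eq_in_count _ _ pred0 (iota 1 p)) ?count_pred0 // => j /s2_in ? /=.
  by apply/negbTE/negP => /andP[_]; lia.
rewrite (@eq_in_count _ _ (fun j => j < i) (iota 1 p)) ?count_iota_lt => [|j /= Hj].
  by have := s1_in Hi; move: Hi; rewrite mem_iota; lia.
by have /andP[_ s1j] := s1_in Hj; rewrite ltnS s1j andbT ltn_s1.
Qed.

Lemma count_unused_right i : i \in iota 1 p ->
  count (fun u => n1 < u < n1 + s2 i) U + 1
    + count (fun j => s2 j < s2 i) (iota 1 p) = s2 i.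
Proof.
move=> Hi.
have := count_unused long_ends_uniq long_ends_sub (fun u => n1 < u < n1 + s2 i).
rewrite count_iota_between count_cat !count_map.
have -> : count (preim s1 (fun u => n1 < u < n1 + s2 i)) (iota 1 p) = 0.
  rewrite (@eq_in_count _ _ pred0 (iota 1 p)) ?count_pred0 // => j /s1_in ? /=.
  by apply/negbTE/negP => /andP; lia.
rewrite (@eq_in_count _ _ (fun j => s2 j < s2 i) (iota 1 p)) => [|j /= Hj].
  by set c := count _ (iota 1 p); have := s2_in Hi; lia.
have /andP[s2j _] := s2_in Hj.
by rewrite ltn_add2l -[X in X < _]addn0 ltn_add2l s2j.
Qed.

Lemma sum_count_unused_left :
  \sum_(i <- iota 1 p) count (fun u => s1 i < u < n1.+1) U = alpha n1 p s1.
Proof.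
rewrite /alpha /index_iota subn1 -(eq_big_seq _ count_unused_left) big_split /=.
by rewrite sum_iota1 addnK.
Qed.

Lemma sum_count_unused_right :
  \sum_(i <- iota 1 p) count (fun u => n1 < u < n1 + s2 i) U + Defs.inv p s2
  = beta p s2.
Proof.
have triangle : (p * p.+1) %/ 2
    = p + \sum_(i <- iota 1 p) count (fun j => s2 j < s2 i) (iota 1 p).
  have := sum_count_lt_inj s2_inj; set D := \sum_(i <- iota 1 p) _ => D2.
  by rewrite (_ : p * p.+1 = (p + D) * 2) ?mulnK //; lia.
rewrite /beta /index_iota subn1 -(eq_big_seq _ count_unused_right) !big_split /=.
by rewrite sum1_size size_iota triangle -addnA addnK.
Qed.

Lemma sum_crossing_long_relabel rest pi : C2 ((n1 + n2 - 2 * p) :: rest) pi ->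
  \sum_(b <- long_pairs) \sum_(q <- [seq (g q.1, g q.2) | q <- pi])
     (crossing b q + crossing q b)
  = alpha n1 p s1 + \sum_(i <- iota 1 p) count (fun u => n1 < u < n1 + s2 i) U.
Proof.
move=> pi_C2; have /andP[pi_pair _] := pi_C2.
rewrite -sum_count_unused_left -big_split big_map; apply: eq_big_seq => i Hi /=.
rewrite big_map.
rewrite (sum_crossing_relabel long_ends_uniq long_ends_sub size_long_ends _ pi_pair).
- by apply: count_between_split; have := s1_in Hi; have := s2_in Hi; lia.
- exact: C2_snd_gt_head pi_C2.
- by have := s2_in Hi; lia.
Qed.

End LongPairs.

Theorem lemma2p6 (r : nat) (ns : seq nat) (p : nat) (pi' : pairing)
  (s1 s2 : nat -> nat) :
  size ns = r -> 3 <= r -> all (fun n => 0 < n) ns ->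
  let n1 := nth 0 ns 0 in
  let n2 := nth 0 ns 1 in
  1 <= p <= minn n1 n2 ->
  C2 ((n1 + n2 - 2 * p) :: drop 2 ns) pi' ->
  maps_into p n1 s1 -> decreasing_on p s1 ->
  maps_into p n2 s2 -> injective_on p s2 ->
  Cr (F n1 n2 p s1 s2 pi') = alpha n1 p s1 + beta p s2 + Cr pi'.
Proof.
move=> _ _ _ n1 n2 _ pi'_C2 s1_into s1_dec s2_into s2_inj.
have /andP[pi'_pair _] := pi'_C2.
have ends_uniq := long_ends_uniq s1_into s1_dec s2_into s2_inj.
have ends_sub := long_ends_sub s1_into s2_into.
rewrite F_long_relabel Cr_cat (Cr_long_pairs s1_into s1_dec s2_into).
rewrite (Cr_relabel ends_uniq ends_sub (size_long_ends _ _ _ _ _) pi'_pair).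
rewrite (sum_crossing_long_relabel s1_into s1_dec s2_into s2_inj pi'_C2).
rewrite -(sum_count_unused_right s1_into s1_dec s2_into s2_inj).
lia.
Qed.
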